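(* Let $d_1,d_2,d_3,d_4\in\mathbb{C}^*$ satisfy $\sum_{k=1}^4 1/d_k=0$. There exists a quadratic Hamiltonian vector field on $\mathbb{C}^2$ with four distinct non-degenerate singular points $p_1,\dots,p_4$ such that the multiset $\{\det Dv(p_k)\}_{k=1}^4$ equals $\{d_1,\dots,d_4\}$ if and only if one of the following holds: (1) $d_j+d_k\ne0$ for all $j\ne k$; or (2) $\{d_1,\dots,d_4\}=\{d,-d,d,-d\}$ as multisets, for some $d\in\mathbb{C}^*$.
   Context: A quadratic Hamiltonian vector field is $v=P\,\partial_x+Q\,\partial_y$ with $\deg P,\deg Q\le 2$ and $P_x+Q_y\equiv0$. $Dv$ is the Jacobian matrix of $(P,Q)$. A singular point $p$ is non-degenerate if $\det Dv(p)\ne0$. For such $v$, $\operatorname{tr}Dv\equiv0$, so the spectrum at each singular point is determined by $\det Dv(p)$. *)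

(* The field of complex numbers is modelled by an arbitrary
   numClosedFieldType C (algebraically closed, characteristic 0). *)
From HB Require Import structures.
From mathcomp Require Import all_boot all_order all_algebra.
Set Implicit Arguments. Unset Strict Implicit. Unset Printing Implicit Defensive.
Import Order.TTheory GRing.Theory Num.Theory.
Local Open Scope ring_scope.

Record qpoly (R : nzRingType) := QPoly {
  c00 : R; c10 : R; c01 : R; c20 : R; c11 : R; c02 : R }.

Definition qeval (R : comNzRingType) (f : qpoly R) (p : R * R) : R :=
  let: (x, y) := p in
  c00 f + c10 f * x + c01 f * y + c20 f * x ^+ 2 + c11 f * x * y + c02 f * y ^+ 2.

Definition qdx (R : comNzRingType) (f : qpoly R) (p : R * R) : R :=
  let: (x, y) := p in c10 f + c20 f *+ 2 * x + c11 f * y.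
Definition qdy (R : comNzRingType) (f : qpoly R) (p : R * R) : R :=
  let: (x, y) := p in c01 f + c11 f * x + c02 f *+ 2 * y.

Record qvf (R : nzRingType) := QVF { vP : qpoly R; vQ : qpoly R }.

Definition hamiltonian (R : comNzRingType) (v : qvf R) : Prop :=
  forall p : R * R, qdx (vP v) p + qdy (vQ v) p = 0.

Definition Dv (R : comNzRingType) (v : qvf R) (p : R * R) : 'M[R]_2 :=
  \matrix_(i < 2, j < 2)
    if i == 0 :> nat then (if j == 0 :> nat then qdx (vP v) p else qdy (vP v) p)
    else (if j == 0 :> nat then qdx (vQ v) p else qdy (vQ v) p).

Definition singular_pt (R : comNzRingType) (v : qvf R) (p : R * R) : Prop :=
  qeval (vP v) p = 0 /\ qeval (vQ v) p = 0.

Definition nondegenerate (R : comNzRingType) (v : qvf R) (p : R * R) : Prop :=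
  \det (Dv v p) != 0.

(* For a Hamiltonian quadratic field the Jacobian is trace free and affine in the point, so
   h(p) := det Dv(p) is quadratic. As P and Q are quadratic, the Jacobian at the midpoint of two
   singular points p, p' kills p' - p, whence 2 (h p + h p') = q (p' - p) with q the determinant of
   the linear part of the Jacobian. If h p1 + h p2 = 0, the relation sum_k 1 / h pk = 0 forces
   h p3 + h p4 = 0; then p2 - p1 and p4 - p3 are q-isotropic and q-orthogonal, hence parallel, and
   comparing the Jacobians at the two midpoints gives h p3 = +- h p1.
   Conversely, at the singular points (x_k, - psi x_k) of a suitable field, where
   prod_k (x - x_k) = psi(x)^2 + r1 x + r0, the value of h is c prod_(j != k) (x_k - x_j) for a
   constant c; choosing the x_k so that the weights 1 / d_k annihilate all polynomials of degree
   <= 2 realizes every admissible (d_k) without opposite pairs. The alternating case is realized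
   by an explicit field. *)
From Pilot Require Import Defs.
From HB Require Import structures.
From mathcomp Require Import all_boot all_order all_algebra.
From mathcomp Require Import ring zify.
Import Defs.
Set Implicit Arguments. Unset Strict Implicit. Unset Printing Implicit Defensive.
Import Order.TTheory GRing.Theory Num.Theory.
Local Open Scope ring_scope.

Section Algebra.
Variable R : idomainType.

Lemma pair_neq0_mulf_eq0 (x w1 w2 : R) :
  (w1, w2) != (0, 0) -> x * w1 = 0 -> x * w2 = 0 -> x = 0.
Proof.
move=> w_neq0 /eqP; rewrite mulf_eq0 => /orP[/eqP //|/eqP w1_0] /eqP.
by rewrite mulf_eq0 => /orP[/eqP //|/eqP w2_0]; rewrite w1_0 w2_0 eqxx in w_neq0.
Qed.

(* [[a, b], [c, -a]] is the general trace-free 2x2 matrix. *)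
Lemma tracefree_det_kernel (a b c w1 w2 : R) : (w1, w2) != (0, 0) ->
  a * w1 + b * w2 = 0 -> c * w1 - a * w2 = 0 -> - a ^+ 2 - b * c = 0.
Proof.
move=> w_neq0 e1 e2; apply: (pair_neq0_mulf_eq0 w_neq0).
  transitivity (- a * (a * w1 + b * w2) - b * (c * w1 - a * w2)); first ring.
  by rewrite e1 e2; ring.
transitivity (- c * (a * w1 + b * w2) + a * (c * w1 - a * w2)); first ring.
by rewrite e1 e2; ring.
Qed.

(* A trace-free matrix killing w squares to zero, so its image lies on the line of w. *)
Lemma tracefree_kernel_image (a b c w1 w2 z1 z2 : R) :
  a * w1 + b * w2 = 0 -> c * w1 - a * w2 = 0 -> w1 * (c * z1 - a * z2) - w2 * (a * z1 + b * z2) = 0.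
Proof.
move=> e1 e2; transitivity (z1 * (c * w1 - a * w2) - z2 * (a * w1 + b * w2)); first ring.
by rewrite e1 e2; ring.
Qed.

Lemma tracefree_kernel2_eq0 (a b c w1 w2 z1 z2 : R) : w1 * z2 - w2 * z1 != 0 ->
  a * w1 + b * w2 = 0 -> c * w1 - a * w2 = 0 ->
  a * z1 + b * z2 = 0 -> c * z1 - a * z2 = 0 -> [/\ a = 0, b = 0 & c = 0].
Proof.
move=> /mulfI cross_inj ew1 ew2 ez1 ez2; split; apply: cross_inj; rewrite mulr0.
- transitivity (z2 * (a * w1 + b * w2) - w2 * (a * z1 + b * z2)); first ring.
  by rewrite ew1 ez1; ring.
- transitivity (w1 * (a * z1 + b * z2) - z1 * (a * w1 + b * w2)); first ring.
  by rewrite ew1 ez1; ring.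
- transitivity (z2 * (c * w1 - a * w2) - w2 * (c * z1 - a * z2)); first ring.
  by rewrite ew2 ez2; ring.
Qed.
End Algebra.

Lemma cross_eq0_proportional (F : fieldType) (D1 D2 E1 E2 : F) : (D1, D2) != (0, 0) ->
  D1 * E2 = D2 * E1 -> exists m, E1 = m * D1 /\ E2 = m * D2.
Proof.
have [-> D2_neq0|D1_neq0 _ cross] := eqVneq D1 0.
  rewrite xpair_eqE eqxx /= in D2_neq0.
  rewrite mul0r => /esym /eqP; rewrite mulf_eq0 (negbTE D2_neq0) /= => /eqP ->.
  by exists (E2 / D2); rewrite mulr0 divfK.
exists (E1 / D1); rewrite divfK //; split=> //.
by apply: (mulfI D1_neq0); rewrite cross; field.
Qed.

Lemma invrD_eq0 (F : fieldType) (a b : F) : a != 0 -> b != 0 ->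
  (a^-1 + b^-1 == 0) = (a + b == 0).
Proof.
move=> a_neq0 b_neq0; have -> : a^-1 + b^-1 = (a + b) / (a * b) by field; apply/andP.
by rewrite mulf_eq0 invr_eq0 mulf_eq0 (negbTE a_neq0) (negbTE b_neq0) !orbF.
Qed.

Section CharZero.
Variable R : numFieldType.

Lemma mul2f_eq0 (x : R) : 2 * x = 0 -> x = 0.
Proof. by move/eqP; rewrite mulf_eq0 pnatr_eq0 => /eqP. Qed.

Lemma isotropic_orthogonal_parallel (al be ga w1 w2 v1 v2 u1 u2 : R) :
  al * w1 ^+ 2 + be * w1 * w2 + ga * w2 ^+ 2 = 0 ->
  al * v1 ^+ 2 + be * v1 * v2 + ga * v2 ^+ 2 = 0 ->
  2 * al * w1 * v1 + be * (w1 * v2 + w2 * v1) + 2 * ga * w2 * v2 = 0 ->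
  al * u1 ^+ 2 + be * u1 * u2 + ga * u2 ^+ 2 != 0 ->
  w1 * v2 = w2 * v1.
Proof.
move=> iso_w iso_v orth u_neq0; apply/eqP; rewrite -subr_eq0; apply/eqP.
pose disc := be ^+ 2 - 4 * al * ga.
have disc_cross : disc * (w1 * v2 - w2 * v1) ^+ 2 = 0.
  transitivity ((2 * al * w1 * v1 + be * (w1 * v2 + w2 * v1) + 2 * ga * w2 * v2) ^+ 2
     - 4 * (al * w1 ^+ 2 + be * w1 * w2 + ga * w2 ^+ 2) * (al * v1 ^+ 2 + be * v1 * v2 + ga * v2 ^+ 2)).
    by rewrite /disc; ring.
  by rewrite iso_w iso_v orth; ring.
have [disc0|disc_neq0] := eqVneq disc 0; last first.
  by apply/eqP; rewrite -sqrf_eq0; apply/eqP/(mulfI disc_neq0); rewrite mulr0.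
(* With zero discriminant, 4 al Q x = (2 al x1 + be x2)^2 and 4 ga Q x = (2 ga x2 + be x1)^2. *)
have lin_eq0 (x1 x2 : R) : al * x1 ^+ 2 + be * x1 * x2 + ga * x2 ^+ 2 = 0 ->
    2 * al * x1 + be * x2 = 0 /\ 2 * ga * x2 + be * x1 = 0.
  move=> iso; split; apply/eqP; rewrite -sqrf_eq0; apply/eqP.
    transitivity (4 * al * (al * x1 ^+ 2 + be * x1 * x2 + ga * x2 ^+ 2) + disc * x2 ^+ 2).
      by rewrite /disc; ring.
    by rewrite iso disc0; ring.
  transitivity (4 * ga * (al * x1 ^+ 2 + be * x1 * x2 + ga * x2 ^+ 2) + disc * x1 ^+ 2).
    by rewrite /disc; ring.
  by rewrite iso disc0; ring.
have [[Lw Mw] [Lv Mv]] := (lin_eq0 _ _ iso_w, lin_eq0 _ _ iso_v).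
have [al0|al_neq0] := eqVneq al 0; last first.
  apply: mul2f_eq0; apply: (mulfI al_neq0).
  transitivity (v2 * (2 * al * w1 + be * w2) - w2 * (2 * al * v1 + be * v2)); first ring.
  by rewrite Lw Lv; ring.
have [ga0|ga_neq0] := eqVneq ga 0; last first.
  apply: mul2f_eq0; apply: (mulfI ga_neq0).
  transitivity (w1 * (2 * ga * v2 + be * v1) - v1 * (2 * ga * w2 + be * w1)); first ring.
  by rewrite Mw Mv; ring.
have be0 : be = 0.
  by apply/eqP; rewrite -sqrf_eq0; move: disc0; rewrite /disc al0 ga0 !(mulr0, mul0r) subr0 => ->.
by move: u_neq0; rewrite al0 ga0 be0 !mul0r !addr0 eqxx.
Qed.
End CharZero.

Lemma det_mx22 (R : comNzRingType) (A : 'M[R]_2) : \det A = A 0 0 * A 1 1 - A 0 1 * A 1 0.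
Proof.
rewrite (expand_det_row _ 0) !big_ord_recl big_ord0 /cofactor !det_mx11 !mxE /=.
have -> : lift (lift (0 : 'I_2) (0 : 'I_1)) (0 : 'I_1) = 0 :> 'I_2 by apply/val_inj.
have -> : lift 0 (0 : 'I_1) = 1 :> 'I_2 by apply/val_inj.
have -> : (ord0 : 'I_2) = 0 by apply/val_inj.
by rewrite expr0 expr1; ring.
Qed.

(* A quadratic field with P_x + Q_y = 0; the coefficients of y, xy in Q and of xy in P are
   - a1, - 2 a3 and - 2 b5. *)
Record hqvf (R : nzRingType) :=
  HQVF { a0 : R; a1 : R; a2 : R; a3 : R; a5 : R; b0 : R; b1 : R; b3 : R; b5 : R }.

Section HamiltonianNormalForm.
Variables (R : comNzRingType) (k : hqvf R).

Definition hP (p : R * R) : R := let: (x, y) := p in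
  a0 k + a1 k * x + a2 k * y + a3 k * x ^+ 2 - 2 * b5 k * x * y + a5 k * y ^+ 2.
Definition hQ (p : R * R) : R := let: (x, y) := p in
  b0 k + b1 k * x - a1 k * y + b3 k * x ^+ 2 - 2 * a3 k * x * y + b5 k * y ^+ 2.

Definition hsingular (p : R * R) : Prop := hP p = 0 /\ hQ p = 0.

(* The Jacobian at p is the trace-free matrix [[jac11 p, jac12 p], [jac21 p, - jac11 p]]. *)
Definition jac11 (p : R * R) : R := let: (x, y) := p in a1 k + 2 * a3 k * x - 2 * b5 k * y.
Definition jac12 (p : R * R) : R := let: (x, y) := p in a2 k - 2 * b5 k * x + 2 * a5 k * y.
Definition jac21 (p : R * R) : R := let: (x, y) := p in b1 k + 2 * b3 k * x - 2 * a3 k * y.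
Definition hdet (p : R * R) : R := - jac11 p ^+ 2 - jac12 p * jac21 p.

(* jac (p + u) = jac p + lin u; hq is the determinant of the linear part lin. *)
Definition lin11 (u : R * R) : R := let: (u1, u2) := u in 2 * a3 k * u1 - 2 * b5 k * u2.
Definition lin12 (u : R * R) : R := let: (u1, u2) := u in - (2 * b5 k * u1) + 2 * a5 k * u2.
Definition lin21 (u : R * R) : R := let: (u1, u2) := u in 2 * b3 k * u1 - 2 * a3 k * u2.
Definition hq (u : R * R) : R := - lin11 u ^+ 2 - lin12 u * lin21 u.

Definition quad1 (u : R * R) : R := let: (u1, u2) := u in
  a3 k * u1 ^+ 2 - 2 * b5 k * u1 * u2 + a5 k * u2 ^+ 2.
Definition quad2 (u : R * R) : R := let: (u1, u2) := u in
  b3 k * u1 ^+ 2 - 2 * a3 k * u1 * u2 + b5 k * u2 ^+ 2.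

End HamiltonianNormalForm.

Ltac hqvf_unfold :=
  rewrite /hP /hQ /hdet /hq /jac11 /jac12 /jac21 /lin11 /lin12 /lin21 /quad1 /quad2 /=.

Lemma hamiltonian_normal_form (R : comNzRingType) (v : qvf R) : hamiltonian v ->
  exists k : hqvf R, forall p, [/\ qeval (vP v) p = hP k p, qeval (vQ v) p = hQ k p
                                 & \det (Dv v p) = hdet k p].
Proof.
case: v => [[a0' a1' a2' a3' a4' a5'] [b0' b1' b2' b3' b4' b5']] ham.
have := ham (0, 0); have := ham (1, 0); have := ham (0, 1); rewrite /qdx /qdy /=.
move=> h01 h10 h00.
have eb2 : b2' = - a1' by apply/eqP; rewrite -addr_eq0 addrC -h00; apply/eqP; ring.
have d10 := congr2 (fun a b => a - b) h10 h00; rewrite subrr in d10.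
have d01 := congr2 (fun a b => a - b) h01 h00; rewrite subrr in d01.
have eb4 : b4' = - (a3' *+ 2) by apply/eqP; rewrite -addr_eq0 -d10; apply/eqP; ring.
have ea4 : a4' = - (b5' *+ 2) by apply/eqP; rewrite -addr_eq0 -d01; apply/eqP; ring.
subst b2' b4' a4'.
exists (HQVF a0' a1' a2' a3' a5' b0' b1' b3' b5') => -[x y].
by split; rewrite ?det_mx22 ?mxE; hqvf_unfold; ring.
Qed.

Section SingularPairs.
Variables (R : numFieldType) (k : hqvf R).
Local Notation hP := (hP k).
Local Notation hQ := (hQ k).
Local Notation hsingular := (hsingular k).
Local Notation jac11 := (jac11 k).
Local Notation jac12 := (jac12 k).
Local Notation jac21 := (jac21 k).
Local Notation hdet := (hdet k).
Local Notation hq := (hq k).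
Local Notation quad1 := (quad1 k).
Local Notation quad2 := (quad2 k).

(* P and Q are exactly quadratic: P (c +- w) = P c +- (jac c w)_1 + quad1 w. *)
Lemma singular_pair (c1 c2 w1 w2 : R) :
  hsingular (c1 - w1, c2 - w2) -> hsingular (c1 + w1, c2 + w2) ->
  [/\ jac11 (c1, c2) * w1 + jac12 (c1, c2) * w2 = 0,
      jac21 (c1, c2) * w1 - jac11 (c1, c2) * w2 = 0,
      hP (c1, c2) + quad1 (w1, w2) = 0 & hQ (c1, c2) + quad2 (w1, w2) = 0].
Proof.
move=> [Pm Qm] [Pp Qp]; split; apply: mul2f_eq0.
- transitivity (hP (c1 + w1, c2 + w2) - hP (c1 - w1, c2 - w2)); first by hqvf_unfold; ring.
  by rewrite Pm Pp subr0.
- transitivity (hQ (c1 + w1, c2 + w2) - hQ (c1 - w1, c2 - w2)); first by hqvf_unfold; ring.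
  by rewrite Qm Qp subr0.
- transitivity (hP (c1 + w1, c2 + w2) + hP (c1 - w1, c2 - w2)); first by hqvf_unfold; ring.
  by rewrite Pm Pp addr0.
- transitivity (hQ (c1 + w1, c2 + w2) + hQ (c1 - w1, c2 - w2)); first by hqvf_unfold; ring.
  by rewrite Qm Qp addr0.
Qed.

Lemma singular_pair_scaled (e1 e2 w1 w2 m : R) : m != 0 ->
  hsingular (e1 - m * w1, e2 - m * w2) -> hsingular (e1 + m * w1, e2 + m * w2) ->
  [/\ jac11 (e1, e2) * w1 + jac12 (e1, e2) * w2 = 0,
      jac21 (e1, e2) * w1 - jac11 (e1, e2) * w2 = 0,
      hP (e1, e2) + m ^+ 2 * quad1 (w1, w2) = 0 & hQ (e1, e2) + m ^+ 2 * quad2 (w1, w2) = 0].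
Proof.
move=> m_neq0 sm sp; have [J1 J2 P0 Q0] := singular_pair sm sp.
split; [apply: (mulfI m_neq0); rewrite mulr0 -{}J1 | apply: (mulfI m_neq0); rewrite mulr0 -{}J2
       | rewrite -{}P0 | rewrite -{}Q0]; by hqvf_unfold; ring.
Qed.

(* The trapezoidal rule is exact for quadratic polynomials. *)
Lemma hP_sub (x y x' y' : R) : 2 * (hP (x', y') - hP (x, y)) =
  (jac11 (x, y) + jac11 (x', y')) * (x' - x) + (jac12 (x, y) + jac12 (x', y')) * (y' - y).
Proof. by hqvf_unfold; ring. Qed.

Lemma hQ_sub (x y x' y' : R) : 2 * (hQ (x', y') - hQ (x, y)) =
  (jac21 (x, y) + jac21 (x', y')) * (x' - x) - (jac11 (x, y) + jac11 (x', y')) * (y' - y).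
Proof. by hqvf_unfold; ring. Qed.

Lemma hdet_pair (c1 c2 w1 w2 : R) :
  hdet (c1 - w1, c2 - w2) + hdet (c1 + w1, c2 + w2) = 2 * (hdet (c1, c2) + hq (w1, w2)).
Proof. by hqvf_unfold; ring. Qed.

Lemma singular_pair_hdet_mid (c1 c2 w1 w2 : R) : (w1, w2) != (0, 0) ->
  hsingular (c1 - w1, c2 - w2) -> hsingular (c1 + w1, c2 + w2) -> hdet (c1, c2) = 0.
Proof.
by move=> w_neq0 sm sp; have [J1 J2 _ _] := singular_pair sm sp; apply: tracefree_det_kernel J1 J2.
Qed.

Lemma half_sub_half (x x' : R) : (x + x') / 2 - (x' - x) / 2 = x.
Proof. by field. Qed.

Lemma half_add_half (x x' : R) : (x + x') / 2 + (x' - x) / 2 = x'.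
Proof. by field. Qed.

Lemma singular_hdet_add (p p' : R * R) : p != p' -> hsingular p -> hsingular p' ->
  2 * (hdet p + hdet p') = hq (p'.1 - p.1, p'.2 - p.2).
Proof.
case: p p' => [x y] [x' y'] /= neq sing sing'.
have half_eq0 (a b : R) : (b - a) / 2 = 0 -> a = b.
  by move/eqP; rewrite mulf_eq0 invr_eq0 pnatr_eq0 orbF subr_eq0 => /eqP.
have w_neq0 : ((x' - x) / 2, (y' - y) / 2) != (0, 0).
  by apply: contraNneq neq => -[/half_eq0 -> /half_eq0 ->].
have := hdet_pair ((x + x') / 2) ((y + y') / 2) ((x' - x) / 2) ((y' - y) / 2).
have := singular_pair_hdet_mid (c1 := (x + x') / 2) (c2 := (y + y') / 2) w_neq0.
rewrite !half_sub_half !half_add_half => /(_ sing sing') -> ->.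
by hqvf_unfold; field.
Qed.

Section TwoPairs.
Variables c1 c2 w1 w2 e1 e2 m : R.
Hypotheses (sing_cm : hsingular (c1 - w1, c2 - w2)) (sing_cp : hsingular (c1 + w1, c2 + w2)).
Hypotheses (sing_em : hsingular (e1 - m * w1, e2 - m * w2))
           (sing_ep : hsingular (e1 + m * w1, e2 + m * w2)).
Hypotheses (w_neq0 : (w1, w2) != (0, 0)) (m_neq0 : m != 0).
Hypotheses (hdet_cm_neq0 : hdet (c1 - w1, c2 - w2) != 0)
           (hdet_c_opp : hdet (c1 - w1, c2 - w2) + hdet (c1 + w1, c2 + w2) = 0).

Lemma two_pairs_hq_w : hq (w1, w2) = 0.
Proof.
have := hdet_pair c1 c2 w1 w2.
by rewrite hdet_c_opp (singular_pair_hdet_mid w_neq0 sing_cm sing_cp) add0r => /esym/mul2f_eq0.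
Qed.

Lemma two_pairs_quad_cross : w1 * quad2 (w1, w2) - w2 * quad1 (w1, w2) != 0.
Proof.
apply: contra_neq hdet_cm_neq0 => quad_cross0.
have [J1 J2 _ _] := singular_pair sing_cm sing_cp.
have hq_w := two_pairs_hq_w.
have quad1_0 : quad1 (w1, w2) = 0.
  apply/mul2f_eq0/eqP; rewrite -sqrf_eq0; apply/eqP.
  transitivity (- 2 * lin12 k (w1, w2) * (w1 * quad2 (w1, w2) - w2 * quad1 (w1, w2))
                - hq (w1, w2) * w1 ^+ 2); first by hqvf_unfold; ring.
  by rewrite quad_cross0 hq_w; ring.
have quad2_0 : quad2 (w1, w2) = 0.
  apply/mul2f_eq0/eqP; rewrite -sqrf_eq0; apply/eqP.
  transitivity (2 * lin21 k (w1, w2) * (w1 * quad2 (w1, w2) - w2 * quad1 (w1, w2))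
                - hq (w1, w2) * w2 ^+ 2); first by hqvf_unfold; ring.
  by rewrite quad_cross0 hq_w; ring.
apply: (tracefree_det_kernel w_neq0).
  transitivity (jac11 (c1, c2) * w1 + jac12 (c1, c2) * w2 - 2 * quad1 (w1, w2)).
    by hqvf_unfold; ring.
  by rewrite J1 quad1_0; ring.
transitivity (jac21 (c1, c2) * w1 - jac11 (c1, c2) * w2 - 2 * quad2 (w1, w2)).
  by hqvf_unfold; ring.
by rewrite J2 quad2_0; ring.
Qed.

Lemma two_pairs_sum_jac :
  [/\ (jac11 (c1, c2) + jac11 (e1, e2)) * w1 + (jac12 (c1, c2) + jac12 (e1, e2)) * w2 = 0,
      (jac21 (c1, c2) + jac21 (e1, e2)) * w1 - (jac11 (c1, c2) + jac11 (e1, e2)) * w2 = 0,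
      (jac11 (c1, c2) + jac11 (e1, e2)) * (e1 - c1) + (jac12 (c1, c2) + jac12 (e1, e2)) * (e2 - c2)
        = 2 * ((1 - m ^+ 2) * quad1 (w1, w2)) &
      (jac21 (c1, c2) + jac21 (e1, e2)) * (e1 - c1) - (jac11 (c1, c2) + jac11 (e1, e2)) * (e2 - c2)
        = 2 * ((1 - m ^+ 2) * quad2 (w1, w2))].
Proof.
have [Jc1 Jc2 Pc Qc] := singular_pair sing_cm sing_cp.
have [Je1 Je2 Pe Qe] := singular_pair_scaled m_neq0 sing_em sing_ep.
split.
- by rewrite -(addr0 0) -{1}Jc1 -Je1; ring.
- by rewrite -(addr0 0) -{1}Jc2 -Je2; ring.
- rewrite -hP_sub; congr (2 * _).
  by rewrite -(subr0 (hP (e1, e2))) -Pe -(subr0 (hP (c1, c2))) -Pc; ring.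
- rewrite -hQ_sub; congr (2 * _).
  by rewrite -(subr0 (hQ (e1, e2))) -Qe -(subr0 (hQ (c1, c2))) -Qc; ring.
Qed.

Lemma two_pairs_sqr_m : m ^+ 2 = 1.
Proof.
have [N_w1 N_w2 N_z1 N_z2] := two_pairs_sum_jac.
have := tracefree_kernel_image (e1 - c1) (e2 - c2) N_w1 N_w2; rewrite N_z1 N_z2.
move=> cross0; apply/eqP; rewrite eq_sym -subr_eq0; apply/eqP.
apply: (mulIf two_pairs_quad_cross); rewrite mul0r; apply: mul2f_eq0; rewrite -{}cross0; ring.
Qed.

Lemma two_pairs_cross_neq0 :
  (e1 - m * w1, e2 - m * w2) != (c1 - w1, c2 - w2) ->
  (e1 - m * w1, e2 - m * w2) != (c1 + w1, c2 + w2) ->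
  w1 * (e2 - c2) - w2 * (e1 - c1) != 0.
Proof.
move=> neq_cm neq_cp; apply/eqP => /eqP; rewrite subr_eq0 => /eqP /(cross_eq0_proportional w_neq0).
case=> mu [z1E z2E].
have [Jc1 Jc2 _ _] := singular_pair sing_cm sing_cp.
have [Je1 Je2 _ _] := singular_pair_scaled m_neq0 sing_em sing_ep.
have e1E : e1 = c1 + mu * w1 by rewrite -z1E; ring.
have e2E : e2 = c2 + mu * w2 by rewrite -z2E; ring.
rewrite {}e1E {}e2E in Je1 Je2 neq_cm neq_cp.
have quad_neq0 : (2 * quad1 (w1, w2), 2 * quad2 (w1, w2)) != (0, 0).
  apply: contra_neq two_pairs_quad_cross => /eqP; rewrite xpair_eqE.
  by case/andP=> /eqP/mul2f_eq0 -> /eqP/mul2f_eq0 ->; ring.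
(* jac (c + mu w) w - jac c w = mu lin w w = 2 mu (quad1 w, quad2 w) *)
have mu0 : mu = 0.
  apply: (pair_neq0_mulf_eq0 quad_neq0).
    transitivity (jac11 (c1 + mu * w1, c2 + mu * w2) * w1 + jac12 (c1 + mu * w1, c2 + mu * w2) * w2
                  - (jac11 (c1, c2) * w1 + jac12 (c1, c2) * w2)); first by hqvf_unfold; ring.
    by rewrite Je1 Jc1 subr0.
  transitivity (jac21 (c1 + mu * w1, c2 + mu * w2) * w1 - jac11 (c1 + mu * w1, c2 + mu * w2) * w2
                - (jac21 (c1, c2) * w1 - jac11 (c1, c2) * w2)); first by hqvf_unfold; ring.
  by rewrite Je2 Jc2 subr0.
move: neq_cm neq_cp; rewrite mu0 !mul0r !addr0.
have /eqP := two_pairs_sqr_m; rewrite sqrf_eq1.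
by case/orP=> /eqP ->; rewrite ?mul1r ?mulN1r ?opprK eqxx // => _.
Qed.

Lemma two_pairs_hdet :
  (e1 - m * w1, e2 - m * w2) != (c1 - w1, c2 - w2) ->
  (e1 - m * w1, e2 - m * w2) != (c1 + w1, c2 + w2) ->
  hdet (e1 - m * w1, e2 - m * w2) = - m * hdet (c1 - w1, c2 - w2).
Proof.
move=> neq_cm neq_cp.
have [Jc1 Jc2 _ _] := singular_pair sing_cm sing_cp.
have [Je1 Je2 _ _] := singular_pair_scaled m_neq0 sing_em sing_ep.
have [N_w1 N_w2] := two_pairs_sum_jac.
rewrite two_pairs_sqr_m subrr !mul0r !mulr0 => N_z1 N_z2.
have [N11 N12 N21] := tracefree_kernel2_eq0 (two_pairs_cross_neq0 neq_cm neq_cp) N_w1 N_w2 N_z1 N_z2.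
have hq_z : hq (e1 - c1, e2 - c2) = 0.
  apply: (tracefree_det_kernel w_neq0).
    transitivity (jac11 (e1, e2) * w1 + jac12 (e1, e2) * w2
                  - (jac11 (c1, c2) * w1 + jac12 (c1, c2) * w2)).
      by hqvf_unfold; ring.
    by rewrite Je1 Jc1 subr0.
  transitivity (jac21 (e1, e2) * w1 - jac11 (e1, e2) * w2
                - (jac21 (c1, c2) * w1 - jac11 (c1, c2) * w2)).
    by hqvf_unfold; ring.
  by rewrite Je2 Jc2 subr0.
(* With N := jac c + jac e (here N = 0): 2 jac (e - m w) = N + lin (e - c) - 2 m lin w and
   2 jac (c - w) = N - lin (e - c) - 2 lin w. *)
have four_neq0 : (4 : R) != 0 by rewrite pnatr_eq0.
apply/eqP; rewrite -subr_eq0 mulNr opprK; apply/eqP/(mulfI four_neq0); rewrite mulr0.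
transitivity (
  - ((jac11 (c1, c2) + jac11 (e1, e2)) + lin11 k (e1 - c1, e2 - c2) - 2 * m * lin11 k (w1, w2)) ^+ 2
  - ((jac12 (c1, c2) + jac12 (e1, e2)) + lin12 k (e1 - c1, e2 - c2) - 2 * m * lin12 k (w1, w2))
    * ((jac21 (c1, c2) + jac21 (e1, e2)) + lin21 k (e1 - c1, e2 - c2) - 2 * m * lin21 k (w1, w2))
  + m * (- ((jac11 (c1, c2) + jac11 (e1, e2)) - lin11 k (e1 - c1, e2 - c2) - 2 * lin11 k (w1, w2)) ^+ 2
  - ((jac12 (c1, c2) + jac12 (e1, e2)) - lin12 k (e1 - c1, e2 - c2) - 2 * lin12 k (w1, w2))
    * ((jac21 (c1, c2) + jac21 (e1, e2)) - lin21 k (e1 - c1, e2 - c2) - 2 * lin21 k (w1, w2)))).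
  by hqvf_unfold; ring.
rewrite N11 N12 N21.
transitivity ((1 + m) * hq (e1 - c1, e2 - c2) + 4 * (m ^+ 2 + m) * hq (w1, w2)).
  by rewrite /hq; ring.
by rewrite hq_z two_pairs_hq_w; ring.
Qed.

End TwoPairs.

Lemma hqE (u1 u2 : R) : hq (u1, u2) = 4 * (b3 k * b5 k - a3 k ^+ 2) * u1 ^+ 2
  + 4 * (a3 k * b5 k - a5 k * b3 k) * u1 * u2 + 4 * (a3 k * a5 k - b5 k ^+ 2) * u2 ^+ 2.
Proof. by hqvf_unfold; ring. Qed.

Section FourPoints.
Variables p1 p2 p3 p4 : R * R.
Hypotheses (sing1 : hsingular p1) (sing2 : hsingular p2)
           (sing3 : hsingular p3) (sing4 : hsingular p4).
Hypotheses (neq12 : p1 != p2) (neq13 : p1 != p3) (neq14 : p1 != p4)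
           (neq23 : p2 != p3) (neq24 : p2 != p4) (neq34 : p3 != p4).
Hypotheses (hdet1_neq0 : hdet p1 != 0)
           (opp12 : hdet p1 + hdet p2 = 0) (opp34 : hdet p3 + hdet p4 = 0).

(* Both differences are isotropic for hq and orthogonal to each other. *)
Lemma four_points_parallel : (p2.1 - p1.1) * (p4.2 - p3.2) = (p2.2 - p1.2) * (p4.1 - p3.1).
Proof.
have S13 := singular_hdet_add neq13 sing1 sing3; have S14 := singular_hdet_add neq14 sing1 sing4.
have S23 := singular_hdet_add neq23 sing2 sing3; have S24 := singular_hdet_add neq24 sing2 sing4.
have iso12 := singular_hdet_add neq12 sing1 sing2; rewrite opp12 mulr0 hqE in iso12.
have iso34 := singular_hdet_add neq34 sing3 sing4; rewrite opp34 mulr0 hqE in iso34.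
have orth : 2 * (4 * (b3 k * b5 k - a3 k ^+ 2)) * (p2.1 - p1.1) * (p4.1 - p3.1)
    + 4 * (a3 k * b5 k - a5 k * b3 k) * ((p2.1 - p1.1) * (p4.2 - p3.2) + (p2.2 - p1.2) * (p4.1 - p3.1))
    + 2 * (4 * (a3 k * a5 k - b5 k ^+ 2)) * (p2.2 - p1.2) * (p4.2 - p3.2) = 0.
  transitivity (hq (p4.1 - p1.1, p4.2 - p1.2) + hq (p3.1 - p2.1, p3.2 - p2.2)
                - hq (p3.1 - p1.1, p3.2 - p1.2) - hq (p4.1 - p2.1, p4.2 - p2.2)).
    by rewrite !hqE; ring.
  by rewrite -S13 -S14 -S23 -S24; ring.
have parallel := isotropic_orthogonal_parallel (esym iso12) (esym iso34) orth.
have [hq13 | ] := eqVneq (hq (p3.1 - p1.1, p3.2 - p1.2)) 0; last by rewrite hqE; apply: parallel.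
have [hq14 | ] := eqVneq (hq (p4.1 - p1.1, p4.2 - p1.2)) 0; last by rewrite hqE; apply: parallel.
(* Otherwise hdet p3 = - hdet p1 = hdet p4 = - hdet p3, forcing hdet p1 = 0. *)
have opp13 := mul2f_eq0 (etrans S13 hq13); have opp14 := mul2f_eq0 (etrans S14 hq14).
exfalso; move/eqP: hdet1_neq0; apply; apply: mul2f_eq0.
transitivity ((hdet p1 + hdet p3) + (hdet p1 + hdet p4) - (hdet p3 + hdet p4)); first ring.
by rewrite opp13 opp14 opp34 addr0 subrr.
Qed.

Lemma four_points_hdet : hdet p3 = hdet p1 \/ hdet p3 = - hdet p1.
Proof.
have sub_neq0 (p q : R * R) : p != q -> (q.1 - p.1, q.2 - p.2) != (0, 0).
  move=> neq; apply: contraNneq neq => /eqP; rewrite xpair_eqE !subr_eq0.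
  by case: p q => [? ?] [? ?] /andP[/eqP /= -> /eqP ->].
have [m [z1E z2E]] := cross_eq0_proportional (sub_neq0 _ _ neq12) four_points_parallel.
have m_neq0 : m != 0.
  by apply: contraTneq (sub_neq0 _ _ neq34) => m0; rewrite z1E z2E m0 !mul0r eqxx.
have w_neq0 : ((p2.1 - p1.1) / 2, (p2.2 - p1.2) / 2) != (0, 0).
  apply: contraTneq (sub_neq0 _ _ neq12) => /eqP; rewrite xpair_eqE !mulf_eq0 !invr_eq0 pnatr_eq0 !orbF.
  by case/andP=> /eqP -> /eqP ->; rewrite eqxx.
have [mw1 mw2] : m * ((p2.1 - p1.1) / 2) = (p4.1 - p3.1) / 2
                 /\ m * ((p2.2 - p1.2) / 2) = (p4.2 - p3.2) / 2.
  by rewrite z1E z2E !mulrA.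
have := two_pairs_sqr_m (c1 := (p1.1 + p2.1) / 2) (c2 := (p1.2 + p2.2) / 2)
  (w1 := (p2.1 - p1.1) / 2) (w2 := (p2.2 - p1.2) / 2)
  (e1 := (p3.1 + p4.1) / 2) (e2 := (p3.2 + p4.2) / 2) (m := m).
have := two_pairs_hdet (c1 := (p1.1 + p2.1) / 2) (c2 := (p1.2 + p2.2) / 2)
  (w1 := (p2.1 - p1.1) / 2) (w2 := (p2.2 - p1.2) / 2)
  (e1 := (p3.1 + p4.1) / 2) (e2 := (p3.2 + p4.2) / 2) (m := m).
rewrite mw1 mw2 !half_sub_half !half_add_half -!surjective_pairing.
have [neq31 neq32] : p3 != p1 /\ p3 != p2 by rewrite ![p3 == _]eq_sym.
move=> /(_ sing1 sing2 sing3 sing4 w_neq0 m_neq0 hdet1_neq0 opp12 neq31 neq32) ->.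
move=> /(_ sing1 sing2 sing3 sing4 w_neq0 m_neq0 hdet1_neq0 opp12) /eqP.
by rewrite sqrf_eq1 => /orP[] /eqP ->; [right; rewrite mulN1r | left; rewrite opprK mul1r].
Qed.

End FourPoints.

Lemma hdet_opposite_pairs (p1 p2 p3 p4 : R * R) :
  uniq [:: p1; p2; p3; p4] -> {in [:: p1; p2; p3; p4], forall p, hsingular p /\ hdet p != 0} ->
  \sum_(p <- [:: p1; p2; p3; p4]) (hdet p)^-1 = 0 -> hdet p1 + hdet p2 = 0 ->
  perm_eq [:: hdet p1; hdet p2; hdet p3; hdet p4] [:: hdet p1; - hdet p1; hdet p1; - hdet p1].
Proof.
rewrite /= !inE !negb_or => /and4P[/and3P[n12 n13 n14] /andP[n23 n24] n34 _] sing_nd.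
have [[s1 h1] [s2 h2] [s3 h3] [s4 h4]] : [/\ hsingular p1 /\ hdet p1 != 0, hsingular p2 /\ hdet p2 != 0,
    hsingular p3 /\ hdet p3 != 0 & hsingular p4 /\ hdet p4 != 0].
  by split; apply: sing_nd; rewrite !inE eqxx ?orbT.
rewrite !big_cons big_nil addr0 => inv_sum opp12.
have /eqP opp34 : hdet p3 + hdet p4 == 0.
  rewrite -invrD_eq0 //; move/eqP: opp12; rewrite -invrD_eq0 // => /eqP inv12.
  by rewrite -[X in _ == X]inv_sum addrA inv12 add0r.
have e2 : hdet p2 = - hdet p1 by apply/eqP; rewrite -addr_eq0 addrC opp12.
have e4 : hdet p4 = - hdet p3 by apply/eqP; rewrite -addr_eq0 addrC opp34.
rewrite e2 e4; case: (four_points_hdet s1 s2 s3 s4 n12 n13 n14 n23 n24 n34 h1 opp12 opp34) => -> //.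
by rewrite opprK; apply/permP => f /=; lia.
Qed.

End SingularPairs.

Definition pair_sums (R : nzRingType) (s : seq R) : R := \prod_(x <- s) \prod_(y <- s) (x + y).

Lemma pair_sums_perm (R : comNzRingType) (s t : seq R) : perm_eq s t -> pair_sums s = pair_sums t.
Proof. by move=> st; rewrite /pair_sums (perm_big _ st); apply: eq_bigr => x _; apply: perm_big. Qed.

Lemma pair_sums_neq0 (R : idomainType) (s : seq R) (j k : nat) :
  pair_sums s != 0 -> (j < size s)%N -> (k < size s)%N -> s`_j + s`_k != 0.
Proof.
rewrite /pair_sums prodf_seq_neq0 => /allP all_neq0 j_lt k_lt.
have := all_neq0 _ (mem_nth 0 j_lt); rewrite prodf_seq_neq0 => /allP.
by move=> /(_ _ (mem_nth 0 k_lt)).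
Qed.

Lemma pair_sums_eq0 (T : eqType) (R : numFieldType) (f : T -> R) (s : seq T) :
  uniq s -> {in s, forall x, f x != 0} -> pair_sums (map f s) = 0 ->
  exists x y t, perm_eq s [:: x, y & t] /\ f x + f y = 0.
Proof.
move=> uniq_s f_neq0 /eqP; rewrite /pair_sums big_map prodf_seq_eq0 => /hasP[x xs /=].
rewrite big_map prodf_seq_eq0 => /hasP[y ys /= /eqP sum0].
have yx : y != x.
  apply: contraTneq (f_neq0 x xs) => yx; apply/negPn/eqP/mul2f_eq0.
  by rewrite -sum0 yx; ring.
have yrem : y \in rem x s by rewrite (mem_rem_uniq x uniq_s) inE /= yx.
exists x, y, (rem y (rem x s)); split=> //.
by apply: (perm_trans (perm_to_rem xs)); rewrite perm_cons; apply: perm_to_rem.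
Qed.

Definition det_realization (R : comNzRingType) (v : qvf R) (ps : seq (R * R)) (ds : seq R) : Prop :=
  [/\ hamiltonian v, uniq ps, {in ps, forall p, singular_pt v p /\ nondegenerate v p}
    & perm_eq (map (fun p => \det (Dv v p)) ps) ds].

Lemma alternating_of_det_realization (R : numFieldType) (v : qvf R) (ps : seq (R * R)) (ds : seq R) :
  size ps = 4 -> \sum_(d <- ds) d^-1 = 0 -> det_realization v ps ds -> pair_sums ds = 0 ->
  exists d, d != 0 /\ perm_eq ds [:: d; - d; d; - d].
Proof.
move=> size_ps inv_sum [ham uniq_ps sing_nd dets_ds] sums0.
have [k hk] := hamiltonian_normal_form ham.
have dets : map (fun p => \det (Dv v p)) ps = map (hdet k) ps.
  by apply: eq_map => p; case: (hk p).
have sing_nd_k : {in ps, forall p, hsingular k p /\ hdet k p != 0}.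
  by move=> p /sing_nd[[P0 Q0] nd]; rewrite /hsingular; case: (hk p) => <- <- <-.
have sums_k0 : pair_sums (map (hdet k) ps) = 0 by rewrite -dets (pair_sums_perm dets_ds).
have [x [y [t [ps_perm opp]]]] := pair_sums_eq0 uniq_ps (fun p ps => (sing_nd_k p ps).2) sums_k0.
case: t ps_perm => [|z [|u [|? ?]]] ps_perm; move/perm_size: (ps_perm); rewrite size_ps // => _.
have mem_ps : [:: x; y; z; u] =i ps by move=> p; rewrite (perm_mem ps_perm).
have sing_nd_xyzu : {in [:: x; y; z; u], forall p, hsingular k p /\ hdet k p != 0}.
  by move=> p; rewrite mem_ps; apply: sing_nd_k.
have inv_sum_xyzu : \sum_(p <- [:: x; y; z; u]) (hdet k p)^-1 = 0.
  by rewrite -(perm_big _ ps_perm) -(big_map (hdet k) xpredT (fun d => d^-1)) -dets (perm_big _ dets_ds).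
have := hdet_opposite_pairs _ sing_nd_xyzu inv_sum_xyzu opp.
rewrite -(perm_uniq ps_perm) => /(_ uniq_ps).
move=> /(perm_trans (perm_map (hdet k) ps_perm)); rewrite -dets => dets_pm.
exists (hdet k x); split; first by case: (sing_nd_xyzu x); rewrite ?mem_head.
by rewrite perm_sym in dets_ds; apply: perm_trans dets_ds dets_pm.
Qed.

Lemma det_realization_eq (R : comNzRingType) (v : qvf R) (ps : seq (R * R)) (ds : seq R) :
  hamiltonian v -> uniq ps -> {in ps, forall p, singular_pt v p} ->
  map (fun p => \det (Dv v p)) ps = ds -> 0 \notin ds -> det_realization v ps ds.
Proof.
move=> ham uniq_ps sing dets ds_neq0; split=> //; last by rewrite dets.
move=> p p_in; split; first exact: sing.
by apply: contraNneq ds_neq0 => <-; rewrite -dets; apply: (map_f (fun q => \det (Dv v q)) p_in).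
Qed.

Section ParabolaField.
Variables (R : numFieldType) (x1 x2 x3 x4 lam : R).

Definition quartic_sigma1 : R := x1 + x2 + x3 + x4.
Definition quartic_sigma2 : R := x1 * x2 + x1 * x3 + x1 * x4 + x2 * x3 + x2 * x4 + x3 * x4.
Definition quartic_sigma3 : R := x1 * x2 * x3 + x1 * x2 * x4 + x1 * x3 * x4 + x2 * x3 * x4.
Definition quartic_sigma4 : R := x1 * x2 * x3 * x4.
Local Notation sigma1 := quartic_sigma1.
Local Notation sigma2 := quartic_sigma2.
Local Notation sigma3 := quartic_sigma3.
Local Notation sigma4 := quartic_sigma4.

Definition quartic_psi0 : R := (sigma2 - sigma1 ^+ 2 / 4) / 2.
Definition quartic_psi (X : R) : R := X ^+ 2 - sigma1 / 2 * X + quartic_psi0.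
Definition quartic_r1 : R := sigma1 * quartic_psi0 - sigma3.
Definition quartic_r0 : R := sigma4 - quartic_psi0 ^+ 2.
Local Notation psi := quartic_psi.
Local Notation r1 := quartic_r1.
Local Notation r0 := quartic_r0.

Ltac quartic_unfold := unfold quartic_psi, quartic_r1, quartic_r0, quartic_psi0,
  quartic_sigma1, quartic_sigma2, quartic_sigma3, quartic_sigma4.

Lemma quartic_psiE (X : R) : (X - x1) * (X - x2) * (X - x3) * (X - x4) = psi X ^+ 2 + r1 * X + r0.
Proof. by quartic_unfold; field. Qed.

(* P = lam (r0 + r1 x + y^2) / r1 and Q = - lam (y + psi x). *)
Definition parabola_field : qvf R :=
  QVF (QPoly (lam * r0 / r1) lam 0 0 0 (lam / r1))
      (QPoly (- (lam * quartic_psi0)) (lam * sigma1 / 2) (- lam) (- lam) 0 0).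

Lemma parabola_field_hamiltonian : hamiltonian parabola_field.
Proof. by case=> x y; rewrite /qdx /qdy /=; ring. Qed.

(* If r1 = 0 the quartic psi ^+ 2 + r0 is symmetric about the axis of psi, so the mirror image of x1
   is a root at which the derivative of the quartic is opposite to its value at x1. *)
Lemma r1_neq0_of_weights (w1 w2 w3 w4 : R) : uniq [:: x1; x2; x3; x4] ->
  w1 * ((x1 - x2) * (x1 - x3) * (x1 - x4)) = w4 * ((x4 - x1) * (x4 - x2) * (x4 - x3)) ->
  w2 * ((x2 - x1) * (x2 - x3) * (x2 - x4)) = w4 * ((x4 - x1) * (x4 - x2) * (x4 - x3)) ->
  w3 * ((x3 - x1) * (x3 - x2) * (x3 - x4)) = w4 * ((x4 - x1) * (x4 - x2) * (x4 - x3)) ->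
  w1 + w2 != 0 -> w1 + w3 != 0 -> w1 + w4 != 0 -> r1 != 0.
Proof.
rewrite /= !inE !negb_or => /and4P[/and3P[n12 n13 n14] _ _ _] L1 L2 L3 q12 q13 q14.
have D1_neq0 : (x1 - x2) * (x1 - x3) * (x1 - x4) != 0 by rewrite !mulf_neq0 // subr_eq0.
apply/eqP => r1_0; pose y := sigma1 / 2 - x1.
have root_y : (y - x1) * (y - x2) * (y - x3) * (y - x4) = 0.
  transitivity (r1 * (y - x1)); last by rewrite r1_0 mul0r.
  by rewrite /y; quartic_unfold; field.
have dpi_y : (y - x2) * (y - x3) * (y - x4) + (y - x1) * (y - x3) * (y - x4)
    + (y - x1) * (y - x2) * (y - x4) + (y - x1) * (y - x2) * (y - x3)
    = - ((x1 - x2) * (x1 - x3) * (x1 - x4)).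
  transitivity (- ((x1 - x2) * (x1 - x3) * (x1 - x4)) + 2 * r1); last by rewrite r1_0 mulr0 addr0.
  by rewrite /y; quartic_unfold; field.
set D1 := (x1 - x2) * (x1 - x3) * (x1 - x4) in L1 D1_neq0 dpi_y.
set D4 := (x4 - x1) * (x4 - x2) * (x4 - x3) in L1 L2 L3.
have opp_root (wj Dj : R) : Dj = - D1 -> wj * Dj = w4 * D4 -> w1 + wj != 0 -> False.
  move=> DjE Lj; apply/negP/negPn/eqP/(mulIf D1_neq0); rewrite mul0r.
  by transitivity (w1 * D1 - wj * Dj); [rewrite DjE; ring | rewrite L1 Lj subrr].
move/eqP: root_y; rewrite !mulf_eq0 !subr_eq0 -!orbA => /or4P[] /eqP y_root;
  rewrite y_root subrr !(mulr0, mul0r, addr0, add0r) in dpi_y.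
- by move/eqP: D1_neq0; apply; apply: mul2f_eq0; transitivity (D1 - - D1); [ring | rewrite -dpi_y subrr].
- exact: opp_root dpi_y L2 q12.
- exact: opp_root dpi_y L3 q13.
- exact: opp_root dpi_y erefl q14.
Qed.

Hypothesis r1_neq0 : r1 != 0.

Lemma parabola_field_singular (X : R) : (X - x1) * (X - x2) * (X - x3) * (X - x4) = 0 ->
  singular_pt parabola_field (X, - psi X).
Proof.
rewrite quartic_psiE => root_X; split; last by rewrite /= /quartic_psi; ring.
transitivity (lam / r1 * (psi X ^+ 2 + r1 * X + r0)); first by rewrite /=; field.
by rewrite root_X mulr0.
Qed.

(* The derivative of psi ^+ 2 + r1 * X + r0 is 2 psi psi' + r1. *)
Lemma parabola_field_det (X : R) : \det (Dv parabola_field (X, - psi X)) =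
  - (lam ^+ 2 / r1) * ((X - x2) * (X - x3) * (X - x4) + (X - x1) * (X - x3) * (X - x4)
                       + (X - x1) * (X - x2) * (X - x4) + (X - x1) * (X - x2) * (X - x3)).
Proof.
rewrite det_mx22 !mxE /=.
transitivity (- (lam ^+ 2 / r1) * (r1 + 2 * psi X * (2 * X - sigma1 / 2))); first by field.
by congr (_ * _); quartic_unfold; field.
Qed.

Lemma parabola_field_det_realization (ds : seq R) : uniq [:: x1; x2; x3; x4] ->
  ds = [:: - (lam ^+ 2 / r1) * ((x1 - x2) * (x1 - x3) * (x1 - x4));
           - (lam ^+ 2 / r1) * ((x2 - x1) * (x2 - x3) * (x2 - x4));
           - (lam ^+ 2 / r1) * ((x3 - x1) * (x3 - x2) * (x3 - x4));
           - (lam ^+ 2 / r1) * ((x4 - x1) * (x4 - x2) * (x4 - x3))] -> 0 \notin ds ->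
  det_realization parabola_field
    [:: (x1, - psi x1); (x2, - psi x2); (x3, - psi x3); (x4, - psi x4)] ds.
Proof.
move=> uniq_x -> ds_neq0; apply: det_realization_eq ds_neq0.
- exact: parabola_field_hamiltonian.
- by move: uniq_x; rewrite -(map_inj_uniq (f := fun X => (X, - psi X))) // => X Y [].
- by move=> p; rewrite !inE => /or4P[] /eqP ->; apply: parabola_field_singular; ring.
- by rewrite /= !parabola_field_det; congr [:: _; _; _; _]; ring.
Qed.

End ParabolaField.

Lemma lagrange_weights (R : comNzRingType) (w1 w2 w3 w4 x1 x2 x3 x4 : R) :
  w1 + w2 + w3 + w4 = 0 -> w1 * x1 + w2 * x2 + w3 * x3 + w4 * x4 = 0 ->
  w1 * x1 ^+ 2 + w2 * x2 ^+ 2 + w3 * x3 ^+ 2 + w4 * x4 ^+ 2 = 0 ->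
  [/\ w1 * ((x1 - x2) * (x1 - x3) * (x1 - x4)) = w4 * ((x4 - x1) * (x4 - x2) * (x4 - x3)),
      w2 * ((x2 - x1) * (x2 - x3) * (x2 - x4)) = w4 * ((x4 - x1) * (x4 - x2) * (x4 - x3)) &
      w3 * ((x3 - x1) * (x3 - x2) * (x3 - x4)) = w4 * ((x4 - x1) * (x4 - x2) * (x4 - x3))].
Proof.
set M0 := _ + w4; set M1 := _ + w4 * x4; set M2 := _ + w4 * x4 ^+ 2 => M0_0 M1_0 M2_0.
split; apply/eqP; rewrite -subr_eq0; apply/eqP.
- transitivity ((x1 - x4) * (M2 - (x2 + x3) * M1 + x2 * x3 * M0)); first by rewrite /M0 /M1 /M2; ring.
  by rewrite M0_0 M1_0 M2_0; ring.
- transitivity ((x2 - x4) * (M2 - (x1 + x3) * M1 + x1 * x3 * M0)); first by rewrite /M0 /M1 /M2; ring.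
  by rewrite M0_0 M1_0 M2_0; ring.
- transitivity ((x3 - x4) * (M2 - (x1 + x2) * M1 + x1 * x2 * M0)); first by rewrite /M0 /M1 /M2; ring.
  by rewrite M0_0 M1_0 M2_0; ring.
Qed.

Lemma sqr_mul_neq_prod (R : idomainType) (wa wb wc wd : R) : wa + wb + wc + wd = 0 ->
  wa != 0 -> wb != 0 -> wc + wa != 0 -> wc + wb != 0 -> (wa * wb) ^+ 2 != wa * wb * wc * wd.
Proof.
move=> sum0 wa_neq0 wb_neq0 ca_neq0 cb_neq0; rewrite -subr_eq0.
have -> : (wa * wb) ^+ 2 - wa * wb * wc * wd
    = wa * wb * ((wc + wa) * (wc + wb)) - wa * wb * wc * (wa + wb + wc + wd) by ring.
by rewrite sum0 mulr0 subr0 !mulf_neq0.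
Qed.

Section LagrangeNodes.
Variables (C : numClosedFieldType) (w1 w2 w3 w4 : C).
Hypotheses (w1_neq0 : w1 != 0) (w2_neq0 : w2 != 0) (w3_neq0 : w3 != 0) (w4_neq0 : w4 != 0).
Hypotheses (w12 : w1 + w2 != 0) (w13 : w1 + w3 != 0) (w14 : w1 + w4 != 0).
Hypothesis w_sum : w1 + w2 + w3 + w4 = 0.

Lemma lagrange_nodes : exists x1 x2 x3 x4 : C, [/\ uniq [:: x1; x2; x3; x4],
  w1 * x1 + w2 * x2 + w3 * x3 + w4 * x4 = 0 &
  w1 * x1 ^+ 2 + w2 * x2 ^+ 2 + w3 * x3 ^+ 2 + w4 * x4 ^+ 2 = 0].
Proof.
pose s := sqrtC (w1 * w2 * w3 * w4); have s2 : s ^+ 2 = w1 * w2 * w3 * w4 by rewrite sqrtCK.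
exists (w3 * (w1 * w2 + s)), (w1 * w3 * (w2 + w4)), (w1 * (w2 * w3 - s)), 0; split; last 2 first.
- transitivity (w3 * w1 * w2 * (w1 + w2 + w3 + w4)); first ring.
  by rewrite w_sum mulr0.
- transitivity (w3 * w1 * ((w1 + w3) * (s ^+ 2 - w1 * w2 * w3 * w4)
                           + w1 * w2 * w3 * (w2 + w4) * (w1 + w2 + w3 + w4))); first ring.
  by rewrite w_sum s2 subrr; ring.
have s_neq (a b c d : C) : a + b + c + d = 0 -> a * b * c * d = w1 * w2 * w3 * w4 ->
    a != 0 -> b != 0 -> c + a != 0 -> c + b != 0 -> s != a * b /\ s != - (a * b).
  move=> abcd_sum abcd_prod a_neq0 b_neq0 ca cb.
  have := sqr_mul_neq_prod abcd_sum a_neq0 b_neq0 ca cb; rewrite abcd_prod -s2 => sq_neq.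
  by split; apply: contra_neq sq_neq => ->; rewrite ?sqrrN.
have [w23 w24] : w2 + w3 != 0 /\ w2 + w4 != 0.
  split; [apply: contra_neq w14 => w_0 | apply: contra_neq w13 => w_0].
    by transitivity (w1 + w2 + w3 + w4 - (w2 + w3)); [ring | rewrite w_sum w_0 subrr].
  by transitivity (w1 + w2 + w3 + w4 - (w2 + w4)); [ring | rewrite w_sum w_0 subrr].
have s_neq0 : s != 0.
  by rewrite -sqrf_eq0 s2 !mulf_neq0.
have neq_of_sub (a b e : C) : a - b = e -> e != 0 -> a != b by move=> <-; rewrite subr_eq0.
have [s12 s12'] : s != w1 * w2 /\ s != - (w1 * w2).
  by apply: (s_neq _ _ w3 w4) => //; rewrite addrC.
have [s23 _] : s != w2 * w3 /\ s != - (w2 * w3).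
  by apply: (s_neq _ _ w1 w4) => //; [rewrite -w_sum; ring | ring].
have [s14 _] : s != w1 * w4 /\ s != - (w1 * w4).
  by apply: (s_neq _ _ w2 w3) => //; [rewrite -w_sum; ring | ring | rewrite addrC].
have [_ s34'] : s != w3 * w4 /\ s != - (w3 * w4).
  by apply: (s_neq _ _ w1 w2) => //; [rewrite -w_sum; ring | ring].
rewrite /= !inE !negb_or; apply/and4P; split=> //; [apply/and3P; split | apply/andP; split |].
- by apply: (neq_of_sub _ _ (w3 * (s - w1 * w4))); [ring | rewrite mulf_neq0 // subr_eq0].
- by apply: (neq_of_sub _ _ ((w1 + w3) * s)); [ring | rewrite mulf_neq0].
- by rewrite mulf_neq0 // addrC addr_eq0.
- by apply: (neq_of_sub _ _ (w1 * (s + w3 * w4))); [ring | rewrite mulf_neq0 // addr_eq0].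
- by rewrite !mulf_neq0.
- by rewrite mulf_neq0 // subr_eq0 eq_sym.
Qed.

End LagrangeNodes.

Lemma det_realization_of_no_opposite_pair (C : numClosedFieldType) (d1 d2 d3 d4 : C) :
  d1 != 0 -> d2 != 0 -> d3 != 0 -> d4 != 0 -> d1^-1 + d2^-1 + d3^-1 + d4^-1 = 0 ->
  d1 + d2 != 0 -> d1 + d3 != 0 -> d1 + d4 != 0 ->
  exists v (p1 p2 p3 p4 : C * C), det_realization v [:: p1; p2; p3; p4] [:: d1; d2; d3; d4].
Proof.
move=> d1_neq0 d2_neq0 d3_neq0 d4_neq0 inv_sum d12 d13 d14.
have inv_neq0 (d : C) : d != 0 -> d^-1 != 0 by rewrite invr_eq0.
have invD_neq0 (d d' : C) : d != 0 -> d' != 0 -> d + d' != 0 -> d^-1 + d'^-1 != 0.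
  by move=> ? ? ?; rewrite invrD_eq0.
have [x1 [x2 [x3 [x4 [uniq_x m1 m2]]]]] := lagrange_nodes (inv_neq0 _ d1_neq0) (inv_neq0 _ d2_neq0)
  (inv_neq0 _ d3_neq0) (inv_neq0 _ d4_neq0) (invD_neq0 _ _ d1_neq0 d2_neq0 d12)
  (invD_neq0 _ _ d1_neq0 d3_neq0 d13) (invD_neq0 _ _ d1_neq0 d4_neq0 d14) inv_sum.
have [L1 L2 L3] := lagrange_weights inv_sum m1 m2.
have r1_neq0 := r1_neq0_of_weights uniq_x L1 L2 L3 (invD_neq0 _ _ d1_neq0 d2_neq0 d12)
  (invD_neq0 _ _ d1_neq0 d3_neq0 d13) (invD_neq0 _ _ d1_neq0 d4_neq0 d14).
set K := d4^-1 * _ in L1 L2 L3.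
have K_neq0 : K != 0.
  move: uniq_x; rewrite /K /= !inE !negb_or => /and4P[/and3P[_ _ n14] /andP[_ n24] n34 _].
  by rewrite !mulf_neq0 ?invr_eq0 // subr_eq0 eq_sym.
pose lam := sqrtC (- quartic_r1 x1 x2 x3 x4 / K).
have d_of_weight (d D : C) : d != 0 -> d^-1 * D = K -> - (lam ^+ 2 / quartic_r1 x1 x2 x3 x4) * D = d.
  move=> d_neq0 dD; have D_neq0 : D != 0 by apply: contra_neq K_neq0 => D0; rewrite -dD D0 mulr0.
  by rewrite sqrtCK -{}dD; field; rewrite d_neq0 D_neq0 r1_neq0.
exists (parabola_field x1 x2 x3 x4 lam); do 4!eexists.
apply: parabola_field_det_realization => //.
  by rewrite (d_of_weight _ _ d1_neq0 L1) (d_of_weight _ _ d2_neq0 L2)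
             (d_of_weight _ _ d3_neq0 L3) (d_of_weight _ _ d4_neq0 erefl).
by rewrite !inE !negb_or ![0 == _]eq_sym d1_neq0 d2_neq0 d3_neq0 d4_neq0.
Qed.

(* P = y^2 - d^2/16 and Q = 1 - x^2: the singular points are (+-1, +-d/4) and det Dv = 4 x y. *)
Lemma det_realization_of_alternating (R : numFieldType) (d : R) : d != 0 ->
  exists v (p1 p2 p3 p4 : R * R), det_realization v [:: p1; p2; p3; p4] [:: d; - d; d; - d].
Proof.
move=> d_neq0; exists (QVF (QPoly (- (d ^+ 2 / 16)) 0 0 0 0 1) (QPoly 1 0 0 (-1) 0 0)).
exists (1, d / 4), (-1, d / 4), (-1, - (d / 4)), (1, - (d / 4)).
apply: det_realization_eq.
- by case=> x y; rewrite /qdx /qdy /=; ring.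
- have one_neq : (1 : R) != -1 by rewrite -addr_eq0 -mulr2n -mulr_natl mulr1 pnatr_eq0.
  have d4_neq : d / 4 != - (d / 4).
    apply: contra_neq d_neq0 => d4_opp.
    by transitivity (2 * (d / 4 - - (d / 4))); [field | rewrite -d4_opp subrr mulr0].
  by rewrite /= !inE !xpair_eqE !eqxx [-1 == _]eq_sym (negbTE one_neq) (negbTE d4_neq).
- by move=> p; rewrite !inE => /or4P[] /eqP -> ; split; rewrite /=; field.
- by rewrite /= !det_mx22 !mxE /=; congr [:: _; _; _; _]; field.
- by rewrite !inE !negb_or ![0 == _]eq_sym oppr_eq0 d_neq0.
Qed.

Theorem theorem5p4 (C : numClosedFieldType) (d1 d2 d3 d4 : C) :
  d1 != 0 -> d2 != 0 -> d3 != 0 -> d4 != 0 ->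
  d1^-1 + d2^-1 + d3^-1 + d4^-1 = 0 ->
  (exists (v : qvf C) (p1 p2 p3 p4 : C * C),
      [/\ Defs.hamiltonian v,
          uniq [:: p1; p2; p3; p4],
          (forall p, p \in [:: p1; p2; p3; p4] ->
             Defs.singular_pt v p /\ Defs.nondegenerate v p) &
          perm_eq [:: \det (Defs.Dv v p1); \det (Defs.Dv v p2); \det (Defs.Dv v p3); \det (Defs.Dv v p4)]
                  [:: d1; d2; d3; d4]])
  <->
  ((forall j k : 'I_4, j != k ->
      [:: d1; d2; d3; d4]`_j + [:: d1; d2; d3; d4]`_k != 0)
   \/ (exists d : C, d != 0 /\ perm_eq [:: d1; d2; d3; d4] [:: d; -d; d; -d])).
Proof.
move=> d1_neq0 d2_neq0 d3_neq0 d4_neq0 inv_sum; split.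
  case=> v [p1 [p2 [p3 [p4 realization]]]].
  have inv_sum_seq : \sum_(d <- [:: d1; d2; d3; d4]) d^-1 = 0.
    by rewrite !big_cons big_nil addr0 !addrA.
  have [sums0 | sums_neq0] := eqVneq (pair_sums [:: d1; d2; d3; d4]) 0.
    right; exact: (alternating_of_det_realization (ps := [:: p1; p2; p3; p4]) erefl inv_sum_seq
                    realization sums0).
  by left=> j k _; apply: pair_sums_neq0.
case=> [no_opp | [d [d_neq0 d_perm]]].
  have sum_neq0 (j k : nat) (j_lt : (j < 4)%N) (k_lt : (k < 4)%N) : j != k ->
      [:: d1; d2; d3; d4]`_j + [:: d1; d2; d3; d4]`_k != 0.
    exact: (no_opp (Ordinal j_lt) (Ordinal k_lt)).
  have [v [p1 [p2 [p3 [p4 realization]]]]] := det_realization_of_no_opposite_pair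
    d1_neq0 d2_neq0 d3_neq0 d4_neq0 inv_sum (sum_neq0 0 1 isT isT isT)
    (sum_neq0 0 2 isT isT isT) (sum_neq0 0 3 isT isT isT).
  by exists v, p1, p2, p3, p4.
have [v [p1 [p2 [p3 [p4 [ham uniq_p sing_nd dets]]]]]] := det_realization_of_alternating d_neq0.
by exists v, p1, p2, p3, p4; split=> //; rewrite perm_sym in d_perm; apply: perm_trans dets d_perm.
Qed.
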